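(* Let $A\in\mathbb{R}^{m\times n}$ have singular value decomposition $A=U\Sigma V^\top$ (with $U\in\mathbb{R}^{m\times m}$, $V\in\mathbb{R}^{n\times n}$ orthogonal), let $r=\operatorname{rank}(A)$, let $\lambda:=(\sigma_1^2(A),\ldots,\sigma_r^2(A),0,\ldots,0)^\top\in\mathbb{R}^m$, let $1\le s\le r$, and let $$H_s:=\frac{U\operatorname{diag}\big(e_{s-1}(\lambda_{-1}),\ldots,e_{s-1}(\lambda_{-m})\big)U^\top}{e_s(\lambda)}.$$ Then for every $z\in\operatorname{Range}(A^\top)$, $$z^\top A^\top H_s A z\ \ge\ \frac{\sigma_{\min}^2(A)}{\sigma_s^2(A)+\cdots+\sigma_{\min}^2(A)}\,\|z\|_2^2 .$$
   Context: $\sigma_1(A)\ge\cdots\ge\sigma_r(A)=:\sigma_{\min}(A)>0$ are the nonzero singular values of $A$, so $\sigma_s^2(A)+\cdots+\sigma_{\min}^2(A)=\sum_{j=s}^r\sigma_j^2(A)$. For $\xi\in\mathbb{R}^p$ and $1\le\ell\le p$, $e_\ell(\xi):=\sum_{1\le i_1<\cdots<i_\ell\le p}\xi_{i_1}\cdots\xi_{i_\ell}$, and $e_0(\xi):=1$. For $i\in[m]$, $\lambda_{-i}\in\mathbb{R}^{m-1}$ is $\lambda$ with its $i$-th entry removed. $\operatorname{Range}(A^\top)$ is the column space of $A^\top$. *)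

From HB Require Import structures.
From mathcomp Require Import all_boot all_order all_algebra.
Set Implicit Arguments. Unset Strict Implicit. Unset Printing Implicit Defensive.
Import Order.TTheory GRing.Theory Num.Theory.
Local Open Scope ring_scope.

Definition esym_seq (R : comNzRingType) (l : nat) (xi : seq R) : R :=
  \sum_(S : {set 'I_(size xi)} | #|S| == l) \prod_(i in S) xi`_i.

(* xi_{-i}: xi with its i-th entry (0-based index i) removed. *)
Definition remove_entry (T : Type) (i : nat) (xi : seq T) : seq T :=
  take i xi ++ drop i.+1 xi.

(* lambda = (sigma_1^2, ..., sigma_r^2, 0, ..., 0) in R^m (0-based: sigma 0 = sigma_1). *)
Definition lambda_vec (R : nzRingType) (m r : nat) (sigma : nat -> R) : seq R :=
  [seq (if (i < r)%N then sigma i ^+ 2 else 0) | i <- iota 0 m].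

Definition svd_diag (R : nzRingType) (m n : nat) (sigma : nat -> R) : 'M[R]_(m, n) :=
  \matrix_(i < m, j < n) (if (i == j :> nat) then sigma i else 0).

Definition H_mat (R : fieldType) (m r s : nat) (sigma : nat -> R) (U : 'M[R]_m)
  : 'M[R]_m :=
  let lam := lambda_vec m r sigma in
  (esym_seq s lam)^-1 *:
    (U *m diag_mx (\row_(i < m) esym_seq s.-1 (remove_entry i lam)) *m U^T).

From HB Require Import structures.
From mathcomp Require Import all_boot all_order all_algebra.
From mathcomp Require Import lra zify.
Set Implicit Arguments.
Unset Strict Implicit.
Unset Printing Implicit Defensive.
Import Order.TTheory GRing.Theory Num.Theory.
Local Open Scope ring_scope.

(* Write z = A^T y and u = U^T y.  Since A A^T = U diag(lambda) U^T, both sides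
   are diagonal quadratic forms in u:
     |z|^2 = sum_i lambda_i u_i^2,
     z^T A^T H_s A z = sum_i lambda_i^2 e_{s-1}(lambda_{-i}) u_i^2 / e_s(lambda),
   so it suffices that lambda_i e_{s-1}(lambda_{-i}) / e_s(lambda) is at least
   sigma_min^2 / (sigma_s^2 + ... + sigma_min^2) for every i <= r.  Splitting
   e_s(lambda) = lambda_i e_{s-1}(mu) + e_s(mu) with mu = lambda_{-i}, and using
   e_s(mu) <= e_{s-1}(mu) (mu_s + mu_{s+1} + ...) <= e_{s-1}(mu) T with
   T = sigma_s^2 + ... + sigma_{r-1}^2, the ratio is at least
   lambda_i / (lambda_i + T) >= sigma_min^2 / (sigma_min^2 + T). *)

Section ElementarySymmetric.
Variable R : comNzRingType.
Implicit Types xs : seq R.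

Definition esym_poly xs : {poly R} := \prod_(x <- xs) ('X + x%:P).

Lemma esym_seq_coef xs k : (k <= size xs)%N ->
  esym_seq k xs = (esym_poly xs)`_(size xs - k).
Proof.
move=> le_k.
have -> : esym_poly xs = \prod_(p <- map -%R xs) ('X - p%:P).
  by rewrite big_map; apply: eq_bigr => x _; rewrite polyCN opprK.
rewrite coef_prod_XsubC ?size_map ?leq_subr // subKn //.
rewrite /esym_seq mulr_sumr; apply: eq_bigr => S /eqP card_S.
have -> : \prod_(i in S) (map -%R xs)`_i = \prod_(i in S) - xs`_i.
  by apply: eq_bigr => i _; rewrite (nth_map 0).
by rewrite prodrN card_S mulrA -expr2 -exprM mulnC exprM sqrrN !expr1n mul1r.
Qed.

Lemma esym_seq0 xs : esym_seq 0 xs = 1.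
Proof.
by rewrite /esym_seq (big_pred1 set0) ?big_set0 // => S; rewrite /= cards_eq0.
Qed.

Lemma esym_seq_gt_size xs k : (size xs < k)%N -> esym_seq k xs = 0.
Proof.
move=> lt_k; rewrite /esym_seq big1 // => S /eqP card_S.
by have := max_card (mem S); rewrite card_ord card_S leqNgt lt_k.
Qed.

Lemma esym_seq_cons x xs k :
  esym_seq k.+1 (x :: xs) = x * esym_seq k xs + esym_seq k.+1 xs.
Proof.
have coef_cons j : (esym_poly (x :: xs))`_j =
    (if j == 0%N then 0 else (esym_poly xs)`_j.-1) + x * (esym_poly xs)`_j.
  by rewrite /esym_poly big_cons mulrDl coefD coefXM coefCM.
case: (ltngtP k (size xs)) => [lt_k|gt_k|eq_k].
- rewrite !esym_seq_coef ?(ltnW lt_k) //=; last exact: ltnW.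
  by rewrite subSS coef_cons subn_eq0 leqNgt lt_k subnS addrC.
- by rewrite !esym_seq_gt_size ?mulr0 ?addr0 //= ltnS ltnW.
- rewrite eq_k (@esym_seq_gt_size xs (size xs).+1) // !esym_seq_coef //=.
  by rewrite !subnn coef_cons /= add0r addr0.
Qed.

Lemma perm_esym_seq xs ys k : perm_eq xs ys -> esym_seq k xs = esym_seq k ys.
Proof.
move=> pxy; have size_xy := perm_size pxy.
case: (leqP k (size xs)) => le_k.
  by rewrite !esym_seq_coef -?size_xy // /esym_poly (perm_big _ pxy).
by rewrite !esym_seq_gt_size -?size_xy.
Qed.

End ElementarySymmetric.

Section ElementarySymmetricNonneg.
Variable R : numDomainType.
Implicit Types xs : seq R.

Lemma esym_seq_ge0 xs k : (forall i, 0 <= xs`_i) -> 0 <= esym_seq k xs.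
Proof. by move=> xs_ge0; apply: sumr_ge0 => S _; apply: prodr_ge0. Qed.

Lemma esym_seq_gt0 xs k : (forall i, 0 <= xs`_i) ->
  (forall i, (i < k)%N -> 0 < xs`_i) -> 0 < esym_seq k xs.
Proof.
elim: xs k => [|x xs IH] [|k] xs_ge0 xs_gt0; rewrite ?esym_seq0 ?ltr01 //.
  by have := xs_gt0 0%N isT; rewrite ltxx.
rewrite esym_seq_cons ltr_wpDr ?esym_seq_ge0 ?mulr_gt0 //.
- by move=> i; apply: (xs_ge0 i.+1).
- exact: (xs_gt0 0%N).
- by apply: IH => i; [apply: (xs_ge0 i.+1) | apply: (xs_gt0 i.+1)].
Qed.

Lemma esym_seq_succ_le xs k : (forall i, 0 <= xs`_i) ->
  esym_seq k.+1 xs <= esym_seq k xs * \sum_(k <= i < size xs) xs`_i.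
Proof.
elim: xs k => [|x xs IH] k xs_ge0.
  by rewrite esym_seq_gt_size //= big_geq // mulr0.
have tail_ge0 i : 0 <= xs`_i by apply: (xs_ge0 i.+1).
have x_ge0 : 0 <= x by apply: (xs_ge0 0%N).
case: k => [|k].
  rewrite esym_seq_cons !esym_seq0 mulr1 !mul1r /= big_nat_recl //= lerD2l.
  by have := IH 0%N tail_ge0; rewrite esym_seq0 mul1r.
rewrite !esym_seq_cons /= big_add1 /= mulrDl lerD //.
  by rewrite -mulrA ler_wpM2l //; apply: IH.
apply: (le_trans (IH k.+1 tail_ge0)); apply: ler_wpM2l; first exact: esym_seq_ge0.
case: (ltnP k (size xs)) => [lt_k|ge_k]; first by rewrite (big_ltn lt_k) lerDr.
by rewrite !big_geq // leqW.
Qed.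

End ElementarySymmetricNonneg.

Lemma size_remove_entry (T : Type) i (xs : seq T) : (i < size xs)%N ->
  size (remove_entry i xs) = (size xs).-1.
Proof. by move=> lt_i; rewrite size_cat size_take size_drop lt_i; lia. Qed.

Lemma nth_remove_entry (T : Type) (x0 : T) i (xs : seq T) j : (i < size xs)%N ->
  nth x0 (remove_entry i xs) j = nth x0 xs (if (j < i)%N then j else j.+1).
Proof.
move=> lt_i; rewrite nth_cat size_take lt_i.
case: ifP => [lt_ji|/negbT]; rewrite ?nth_take // nth_drop -leqNgt => le_ij.
by congr nth; lia.
Qed.

Lemma perm_remove_entry (T : eqType) (x0 : T) i (xs : seq T) : (i < size xs)%N ->
  perm_eq xs (nth x0 xs i :: remove_entry i xs).
Proof.
move=> lt_i; rewrite /remove_entry -{1}(cat_take_drop i xs) (drop_nth x0) //.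
by rewrite -cat1s perm_catCA.
Qed.

Lemma esym_seq_remove_entry (R : comNzRingType) (xs : seq R) i k : (i < size xs)%N ->
  esym_seq k.+1 xs =
    xs`_i * esym_seq k (remove_entry i xs) + esym_seq k.+1 (remove_entry i xs).
Proof.
by move=> lt_i; rewrite (perm_esym_seq _ (perm_remove_entry 0 lt_i)) esym_seq_cons.
Qed.

Lemma size_lambda_vec (R : nzRingType) m r (sigma : nat -> R) :
  size (lambda_vec m r sigma) = m.
Proof. by rewrite size_map size_iota. Qed.

Lemma nth_lambda_vec (R : nzRingType) m r (sigma : nat -> R) j : (r <= m)%N ->
  (lambda_vec m r sigma)`_j = if (j < r)%N then sigma j ^+ 2 else 0.
Proof.
move=> le_rm; case: (ltnP j m) => [lt_jm|le_mj].
  by rewrite (nth_map 0%N) ?size_iota // nth_iota.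
rewrite nth_default ?size_lambda_vec //.
by case: ifP => // lt_jr; move: (leq_trans lt_jr le_rm); rewrite ltnNge le_mj.
Qed.

Lemma lambda_vec_ge0 (R : realDomainType) m r (sigma : nat -> R) j : (r <= m)%N ->
  0 <= (lambda_vec m r sigma)`_j.
Proof. by move=> le_rm; rewrite nth_lambda_vec //; case: ifP => _; rewrite ?sqr_ge0. Qed.

Section SquaredSingularValues.
Variables (R : realFieldType) (m r : nat) (sigma : nat -> R).
Hypothesis le_rm : (r <= m)%N.
Hypothesis sigma_gt0 : forall i, (i < r)%N -> 0 < sigma i.
Hypothesis sigma_nonincr : forall i j, (i <= j)%N -> (j < r)%N -> sigma j <= sigma i.

Let lam := lambda_vec m r sigma.

Let sigma_ge0 l : (l < r)%N -> 0 <= sigma l.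
Proof. by move=> lt_lr; apply/ltW/sigma_gt0. Qed.

Lemma esym_lambda_vec_gt0 k : (k <= r)%N -> 0 < esym_seq k lam.
Proof.
move=> le_kr; apply: esym_seq_gt0 => [|j lt_jk]; first by move=> j; apply: lambda_vec_ge0.
have lt_jr := leq_trans lt_jk le_kr.
by rewrite nth_lambda_vec // lt_jr exprn_gt0 ?sigma_gt0.
Qed.

(* Removing one of the r positive entries leaves only r - 1 of them, each
   bounded by the corresponding entry of lam. *)
Lemma sum_remove_entry_le k i : (k < r)%N -> (i < r)%N ->
  \sum_(k <= j < m.-1) (remove_entry i lam)`_j <= \sum_(k <= j < r.-1) sigma j ^+ 2.
Proof.
move=> lt_kr lt_ir.
have lt_im : (i < size lam)%N by rewrite size_lambda_vec (leq_trans lt_ir).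
rewrite (big_cat_nat _ (n := r.-1)) /=; [|lia|lia].
rewrite [X in _ + X]big1_seq ?addr0 => [|j]; last first.
  rewrite mem_index_iota => /andP[le_rj lt_jm].
  by rewrite nth_remove_entry // nth_lambda_vec // ifN //; case: ifP; lia.
apply: ler_sum_nat => j /andP[le_kj lt_jr].
rewrite nth_remove_entry // !nth_lambda_vec //.
have lt_j1r : (j.+1 < r)%N by lia.
case: (ltnP j i) => _; rewrite ?lt_j1r ?(ltnW lt_j1r) //.
by rewrite ler_sqr ?nnegrE ?sigma_ge0 ?sigma_nonincr // ltnW.
Qed.

Lemma lambda_vec_ratio_ge k i : (k < r)%N -> (i < r)%N ->
  sigma r.-1 ^+ 2 / (\sum_(k <= j < r) sigma j ^+ 2) <=
  (esym_seq k.+1 lam)^-1 * (lam`_i * esym_seq k (remove_entry i lam)).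
Proof.
move=> lt_kr lt_ir.
have lt_im : (i < size lam)%N by rewrite size_lambda_vec (leq_trans lt_ir).
set mu := remove_entry i lam; set a := esym_seq k mu; set b := esym_seq k.+1 mu.
set T := \sum_(k <= j < r.-1) sigma j ^+ 2; set x := sigma r.-1 ^+ 2.
have mu_ge0 j : 0 <= mu`_j by rewrite nth_remove_entry // lambda_vec_ge0.
have a_ge0 : 0 <= a := esym_seq_ge0 k mu_ge0.
have T_ge0 : 0 <= T by rewrite sumr_ge0 // => j _; rewrite sqr_ge0.
have lt_r1r : (r.-1 < r)%N by lia.
have x_gt0 : 0 < x by rewrite exprn_gt0 ?sigma_gt0.
have x_le : x <= lam`_i.
  by rewrite nth_lambda_vec // lt_ir ler_sqr ?nnegrE ?sigma_ge0 ?sigma_nonincr //; lia.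
have b_le : b <= a * T.
  apply: le_trans (esym_seq_succ_le k mu_ge0) _.
  rewrite size_remove_entry // size_lambda_vec ler_wpM2l //.
  exact: sum_remove_entry_le.
have sumE : \sum_(k <= j < r) sigma j ^+ 2 = T + x.
  by rewrite -big_nat_recr /= ?prednK //; lia.
have E_gt0 := esym_lambda_vec_gt0 lt_kr.
rewrite (esym_seq_remove_entry k lt_im) -/mu -/a -/b in E_gt0 *.
rewrite sumE [leRHS]mulrC ler_pdivlMr // mulrAC ler_pdivrMr ?ltr_wpDl //.
have xb_le : x * b <= lam`_i * a * T.
  rewrite -mulrA; apply: le_trans (ler_wpM2l (ltW x_gt0) b_le) _.
  by rewrite ler_wpM2r // mulr_ge0.
by rewrite !mulrDr; lra.
Qed.
End SquaredSingularValues.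

Lemma svd_diag_mul_tr (R : nzRingType) m n (sigma : nat -> R) :
  svd_diag m n sigma *m (svd_diag m n sigma)^T =
    diag_mx (\row_(i < m) if (i < n)%N then sigma i ^+ 2 else 0).
Proof.
apply/matrixP => i k; rewrite !mxE.
case: (eqVneq i k) => [<-|ne_ik]; rewrite ?mulr1n ?mulr0n.
  case: (ltnP i n) => [lt_in|le_ni].
    rewrite (bigD1 (Ordinal lt_in)) //= big1 => [|j ne_j]; rewrite !mxE ?eqxx ?addr0 //.
    case: eqP => [eq_ij|]; rewrite ?mul0r //.
    by case/eqP: ne_j; apply: val_inj; rewrite /= eq_ij.
  apply: big1 => j _; rewrite !mxE; case: eqP => [eq_ij|]; rewrite ?mul0r //.
  by move: (ltn_ord j); rewrite -eq_ij ltnNge le_ni.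
apply: big1 => j _; rewrite !mxE.
case: eqP => [eq_ij|]; case: eqP => [eq_kj|]; rewrite ?mul0r ?mulr0 //.
by move/eqP: ne_ik; case; apply: val_inj; rewrite /= eq_ij eq_kj.
Qed.

Lemma rank_svd_diag (R : fieldType) m n (sigma : nat -> R) k :
  (k <= minn m n)%N -> (forall i, (i < k)%N -> sigma i != 0) ->
  (forall i, (k <= i)%N -> (i < minn m n)%N -> sigma i = 0) ->
  \rank (svd_diag m n sigma) = k.
Proof.
move=> le_k sigma_neq0 sigma_eq0.
set d := \row_(i < m) if (i < k)%N then sigma i else 1.
have -> : svd_diag m n sigma = diag_mx d *m pid_mx k.
  apply/matrixP => i j; rewrite mul_diag_mx !mxE.
  case: eqP => [eq_ij|]; last by rewrite mulr0.
  case: ifP => [|/negbT]; rewrite ?mulr1 ?mul1r ?mulr0 // -leqNgt => le_ki.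
  by rewrite sigma_eq0 // leq_min ltn_ord eq_ij ltn_ord.
have d_unit : diag_mx d \in unitmx.
  rewrite unitmxE det_diag unitfE; apply/prodf_neq0 => i _; rewrite mxE.
  by case: ifP => [/sigma_neq0|]; rewrite ?oner_neq0.
move: le_k; rewrite leq_min => /andP[le_km le_kn].
by rewrite eqmxMfull ?row_full_unit // rank_pid_mx.
Qed.

Lemma diag_quad_form (R : comPzRingType) m (g : 'rV[R]_m) (u : 'cV[R]_m) :
  (u^T *m diag_mx g *m u) 0 0 = \sum_i g 0 i * u i 0 ^+ 2.
Proof.
rewrite mul_mx_diag mxE; apply: eq_bigr => i _.
by rewrite !mxE mulrAC mulrC expr2.
Qed.

Section SingularValueDecomposition.
Variables (R : realFieldType) (m n : nat) (A : 'M[R]_(m, n)).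
Variables (U : 'M[R]_m) (V : 'M[R]_n) (sigma : nat -> R) (r : nat).
Hypotheses (UtU : U^T *m U = 1%:M) (VtV : V^T *m V = 1%:M).
Hypothesis sigma_ge0 : forall i, (i < minn m n)%N -> 0 <= sigma i.
Hypothesis sigma_nonincr :
  forall i j, (i <= j)%N -> (j < minn m n)%N -> sigma j <= sigma i.
Hypothesis defA : A = U *m svd_diag m n sigma *m V^T.
Hypothesis rankA : \rank A = r.

Lemma svd_rank_spec :
  [/\ (r <= minn m n)%N, forall i, (i < r)%N -> 0 < sigma i
    & forall i, (r <= i)%N -> (i < minn m n)%N -> sigma i = 0].
Proof.
have [k [le_k sigma_neq0 sigma_eq0]] : exists k, [/\ (k <= minn m n)%N,
    forall i, (i < k)%N -> sigma i != 0
  & forall i, (k <= i)%N -> (i < minn m n)%N -> sigma i = 0].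
  have ex_k : exists k, (minn m n <= k)%N || (sigma k == 0).
    by exists (minn m n); rewrite leqnn.
  case: (ex_minnP ex_k) => k sigma_k min_k; exists k; split.
  - by apply: min_k; rewrite leqnn.
  - move=> i lt_ik; apply/negP => /eqP sigma_i.
    by have := min_k i; rewrite sigma_i eqxx orbT leqNgt lt_ik => /(_ isT).
  - move=> i le_ki lt_i; move: sigma_k; rewrite leqNgt (leq_ltn_trans le_ki lt_i).
    move=> /eqP sigma_k; apply/le_anti.
    by rewrite sigma_ge0 // -sigma_k andbT sigma_nonincr.
have U_unit : U \in unitmx by case: (mulmx1_unit UtU).
have Vt_unit : V^T \in unitmx by case: (mulmx1_unit VtV).
have rankA_k : \rank A = k.
  rewrite defA mxrankMfree ?row_free_unit // eqmxMfull ?row_full_unit //.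
  exact: rank_svd_diag.
rewrite -rankA rankA_k; split=> // i lt_ik.
by rewrite lt_def sigma_neq0 //=; apply: sigma_ge0 (leq_trans lt_ik le_k).
Qed.

Let lam := lambda_vec m r sigma.

Lemma svd_gram : A *m A^T = U *m diag_mx (\row_(i < m) lam`_i) *m U^T.
Proof.
have [le_r lt_sigma eq_sigma] := svd_rank_spec.
have /andP[le_rm le_rn] : (r <= m)%N && (r <= n)%N by rewrite -leq_min.
rewrite defA !trmx_mul trmxK !mulmxA -(mulmxA _ V^T) VtV mulmx1 -(mulmxA U).
rewrite svd_diag_mul_tr; congr (_ *m diag_mx _ *m _); apply/rowP => i.
rewrite !mxE nth_lambda_vec //.
case: (ltnP i r) => [lt_ir|le_ri]; first by rewrite (leq_trans lt_ir le_rn).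
by case: ifP => // lt_in; rewrite eq_sigma ?expr0n // leq_min ltn_ord.
Qed.

Lemma svd_norm_range (y : 'cV[R]_m) :
  \sum_(i < n) (A^T *m y) i 0 ^+ 2 = \sum_(i < m) lam`_i * (U^T *m y) i 0 ^+ 2.
Proof.
transitivity (((A^T *m y)^T *m (A^T *m y)) 0 0).
  by rewrite mxE; apply: eq_bigr => i _; rewrite !mxE expr2.
transitivity (((U^T *m y)^T *m diag_mx (\row_(i < m) lam`_i) *m (U^T *m y)) 0 0).
  by rewrite !trmx_mul !trmxK !mulmxA -(mulmxA _ A) svd_gram !mulmxA.
by rewrite diag_quad_form; apply: eq_bigr => i _; rewrite mxE.
Qed.

Lemma svd_H_form_range s (y : 'cV[R]_m) :
  ((A^T *m y)^T *m A^T *m H_mat r s sigma U *m A *m (A^T *m y)) 0 0 =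
    (esym_seq s lam)^-1 * \sum_(i < m)
      lam`_i ^+ 2 * esym_seq s.-1 (remove_entry i lam) * (U^T *m y) i 0 ^+ 2.
Proof.
set D := \row_(i < m) esym_seq s.-1 (remove_entry i lam).
set L := \row_(i < m) lam`_i.
have cancelU p (X : 'M_(p, m)) : X *m U^T *m U = X by rewrite -mulmxA UtU mulmx1.
transitivity ((esym_seq s lam)^-1 *
    ((U^T *m y)^T *m (diag_mx L *m diag_mx D *m diag_mx L) *m (U^T *m y)) 0 0).
  rewrite trmx_mul trmxK.
  have -> : y^T *m A *m A^T *m H_mat r s sigma U *m A *m (A^T *m y) =
      y^T *m (A *m A^T) *m H_mat r s sigma U *m ((A *m A^T) *m y).
    by rewrite !mulmxA.
  rewrite svd_gram /H_mat -/lam -/D -/L -scalemxAr -scalemxAl mxE.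
  by rewrite !mulmxA !cancelU trmx_mul trmxK.
rewrite !mulmx_diag diag_quad_form; congr (_ * _); apply: eq_bigr => i _.
by rewrite !mxE; congr (_ * _); rewrite mulrAC expr2.
Qed.
End SingularValueDecomposition.

Theorem lemma2p3 (R : realFieldType) (m n : nat) (A : 'M[R]_(m, n))
    (U : 'M[R]_m) (V : 'M[R]_n) (sigma : nat -> R) (r s : nat) :
    U^T *m U = 1%:M -> U *m U^T = 1%:M ->
    V^T *m V = 1%:M -> V *m V^T = 1%:M ->
    (forall i, (i < minn m n)%N -> 0 <= sigma i) ->
    (forall i j, (i <= j)%N -> (j < minn m n)%N -> sigma j <= sigma i) ->
    A = U *m svd_diag m n sigma *m V^T ->
    \rank A = r ->
    (1 <= s)%N -> (s <= r)%N ->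
    forall z : 'cV[R]_n, (exists y : 'cV[R]_m, z = A^T *m y) ->
      (z^T *m A^T *m @H_mat R m r s sigma U *m A *m z) 0 0 >=
        sigma r.-1 ^+ 2 / (\sum_(s.-1 <= j < r) sigma j ^+ 2)
        * \sum_(i < n) z i 0 ^+ 2.
Proof.
move=> UtU _ VtV _ sigma_ge0 sigma_nonincr defA rankA s_gt0 le_sr z [y ->].
have [le_r sigma_gt0 _] := svd_rank_spec UtU VtV sigma_ge0 sigma_nonincr defA rankA.
have /andP[le_rm _] : (r <= m)%N && (r <= n)%N by rewrite -leq_min.
have sigma_nonincr_r i j : (i <= j)%N -> (j < r)%N -> sigma j <= sigma i.
  by move=> le_ij lt_jr; apply: sigma_nonincr => //; apply: leq_trans le_r.
case: s s_gt0 le_sr => // s _ lt_sr.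
rewrite (svd_H_form_range UtU VtV sigma_ge0 sigma_nonincr defA rankA).
rewrite (svd_norm_range UtU VtV sigma_ge0 sigma_nonincr defA rankA) !mulr_sumr.
apply: ler_sum => i _ /=.
case: (ltnP i r) => [lt_ir|le_ri]; last first.
  by rewrite nth_lambda_vec // ltnNge le_ri /= expr0n /= !mul0r !mulr0.
have ratio := lambda_vec_ratio_ge le_rm sigma_gt0 sigma_nonincr_r lt_sr lt_ir.
have weight_ge0 := mulr_ge0 (lambda_vec_ge0 sigma i le_rm) (sqr_ge0 ((U^T *m y) i 0)).
apply: le_trans (ler_wpM2r weight_ge0 ratio) _; lra.
Qed.
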